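(* Let $(R,\mathfrak{m})$ be a finite commutative local ring with identity whose maximal ideal $\mathfrak{m}$ is a principal ideal, and let $I$ be an ideal of $R$. Then $\Gamma''_I(R)$ is a planar graph.
   Context: For a commutative ring $R$ and an ideal $I$ of $R$, $\Gamma''_I(R)$ is the simple undirected graph whose vertex set is $\{x\in R\setminus I : xR+I\neq R\}$, and two distinct vertices $x,y$ are adjacent if and only if $x\notin yR+I$ and $y\notin xR+I$. A graph is planar if it can be drawn in the plane with edges meeting only at their endpoints. *)

From HB Require Import structures.
From mathcomp Require Import all_boot all_algebra.
From Stdlib Require Import Reals.

Set Implicit Arguments.
Unset Strict Implicit.
Unset Printing Implicit Defensive.

Import GRing.Theory.
Local Open Scope ring_scope.

Section Ideals.
Variable A : finComNzRingType.

Definition is_ideal (I : {set A}) : Prop :=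
  (0 \in I) /\
  (forall x y, x \in I -> y \in I -> x + y \in I) /\
  (forall r x, x \in I -> r * x \in I).

Definition principal_plus (x : A) (I : {set A}) : {set A} :=
  [set z | [exists r : A, exists i : A, (i \in I) && (z == x * r + i)]].

Definition principal (x : A) : {set A} := [set z | [exists r : A, z == x * r]].

Definition local_with_max (m : {set A}) : Prop :=
  is_ideal m /\ (1 \notin m) /\
  (forall J : {set A}, is_ideal J -> 1 \notin J -> J \subset m).

Definition Gpp_vertices (I : {set A}) : {set A} :=
  [set x | (x \notin I) && (principal_plus x I != [set: A])].

Definition Gpp_adj (I : {set A}) (x y : A) : Prop :=
  x <> y /\ x \notin principal_plus y I /\ y \notin principal_plus x I.

End Ideals.

Definition in01 (t : R) : Prop := Rle 0 t /\ Rle t 1.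
Definition in01o (t : R) : Prop := Rlt 0 t /\ Rlt t 1.

Definition planar_graph (T : finType) (Vs : {set T}) (adj : T -> T -> Prop) : Prop :=
  exists (pos : T -> R * R) (arc : T -> T -> R -> R * R),
    (forall u v, u \in Vs -> v \in Vs -> pos u = pos v -> u = v) /\
    (forall u v, u \in Vs -> v \in Vs -> adj u v ->
       (forall t, in01 t -> continuity_pt (fun s => fst (arc u v s)) t /\
                            continuity_pt (fun s => snd (arc u v s)) t) /\
       arc u v 0%R = pos u /\ arc u v 1%R = pos v /\
       (forall s t, in01 s -> in01 t -> arc u v s = arc u v t -> s = t) /\
       (forall w t, w \in Vs -> in01o t -> arc u v t <> pos w)) /\
    (forall u v u' v', u \in Vs -> v \in Vs -> u' \in Vs -> v' \in Vs ->
       adj u v -> adj u' v' ->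
       ~ ((u = u' /\ v = v') \/ (u = v' /\ v = u')) ->
       forall s t, in01o s -> in01o t -> arc u v s <> arc u' v' t).

(* If the maximal ideal is t A, then an element x of m is x = t x1 with
   x A strictly smaller than x1 A (Nakayama: x1 = x a would make x1 (1 - t a)
   = 0 with 1 - t a a unit).  Dividing out t repeatedly from two elements
   therefore terminates with a unit, so the principal ideals of A form a
   chain: of any two elements, one divides the other.  Since 0 lies in I, no
   two vertices of Gamma''_I(A) are adjacent, and an edgeless graph is
   drawn by placing its vertices at distinct points. *)
From HB Require Import structures.
From mathcomp Require Import all_boot all_algebra.
From Stdlib Require Import Reals.

Set Implicit Arguments.
Unset Strict Implicit.
Unset Printing Implicit Defensive.
Import GRing.Theory.
Local Open Scope ring_scope.

Section PrincipalIdeals.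
Variable A : finComNzRingType.

Lemma principalP (x z : A) : reflect (exists r, z = x * r) (z \in principal x).
Proof.
rewrite inE; apply: (iffP existsP) => [[r /eqP ->]|[r ->]]; by exists r.
Qed.

Lemma principal_mul (x r : A) : x * r \in principal x.
Proof. by apply/principalP; exists r. Qed.

Lemma principal_id (x : A) : x \in principal x.
Proof. by rewrite -[x in x \in _]mulr1 principal_mul. Qed.

Lemma principal_is_ideal (x : A) : is_ideal (principal x).
Proof.
split; [|split].
- by rewrite -(mulr0 x) principal_mul.
- by move=> _ _ /principalP[r ->] /principalP[s ->]; rewrite -mulrDr principal_mul.
- by move=> r _ /principalP[s ->]; rewrite mulrCA principal_mul.
Qed.

Lemma principal_sub_plus (I : {set A}) (x : A) :
  0 \in I -> principal x \subset principal_plus x I.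
Proof.
move=> I0; apply/subsetP => _ /principalP[r ->]; rewrite inE.
by apply/existsP; exists r; apply/existsP; exists 0; rewrite I0 addr0 eqxx.
Qed.

End PrincipalIdeals.

Section LocalRing.
Variables (A : finComNzRingType) (m : {set A}).
Hypothesis m_local : local_with_max m.

Lemma notin_max_unit (z : A) : z \notin m -> exists w, 1 = z * w.
Proof.
move=> zNm; have [_ [_ m_max]] := m_local.
have [/principalP|z1N] := boolP (1 \in principal z); first by [].
by move/subsetP: (m_max _ (principal_is_ideal z) z1N) => /(_ z (principal_id z)) zm;
  rewrite zm in zNm.
Qed.

Lemma one_sub_max_notin (x : A) : x \in m -> 1 - x \notin m.
Proof.
have [[_ [m_add _]] [m1N _]] := m_local.
by move=> xm; apply: contra m1N => /m_add /(_ xm); rewrite subrK.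
Qed.

Variable t : A.
Hypothesis m_principal : m = principal t.

Lemma principal_proper_cofactor (x x1 : A) :
  x != 0 -> x = t * x1 -> principal x \proper principal x1.
Proof.
move=> xN0 ex; rewrite properE; apply/andP; split.
  by apply/subsetP => _ /principalP[r ->]; rewrite ex -mulrA mulrCA principal_mul.
apply: contra xN0 => /subsetP /(_ x1 (principal_id x1)) /principalP[a ea].
have [w ew] : exists w, 1 = (1 - t * a) * w.
  by apply/notin_max_unit/one_sub_max_notin; rewrite m_principal principal_mul.
have x1_0 : x1 = 0.
  have x1_ann : x1 * (1 - t * a) = 0.
    by rewrite mulrBr mulr1 mulrCA mulrA -ex -ea subrr.
  by rewrite -[x1]mulr1 ew mulrA x1_ann mul0r.
by rewrite ex x1_0 mulr0.
Qed.

Lemma principal_chain (x y : A) : (y \in principal x) || (x \in principal y).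
Proof.
have [n] := ubnP (#|~: principal x| + #|~: principal y|)%nat.
elim: n x y => [//|n IHn] x y lt_n.
have [xNm|xm] := boolP (x \notin m).
  by have [w ew] := notin_max_unit xNm; rewrite -[y]mul1r ew -mulrA principal_mul.
have [yNm|ym] := boolP (y \notin m).
  by have [w ew] := notin_max_unit yNm; rewrite -[x]mul1r ew -mulrA principal_mul orbT.
have [->|xN0] := eqVneq x 0; first by rewrite -(mulr0 y) principal_mul orbT.
have [->|yN0] := eqVneq y 0; first by rewrite -(mulr0 x) principal_mul.
move: xm ym; rewrite !negbK m_principal => /principalP[x1 ex] /principalP[y1 ey].
have shrink z z1 : z != 0 -> z = t * z1 ->
    (#|~: principal z1| < #|~: principal z|)%nat.
  by move=> zN0 ez; apply/proper_card; rewrite properC principal_proper_cofactor.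
have lt_cofactors : (#|~: principal x1| + #|~: principal y1| < n)%nat.
  rewrite -ltnS; apply: leq_trans lt_n; rewrite ltnS -addSn.
  by apply: leq_add; [apply: shrink | apply/ltnW/shrink].
have /orP[/principalP[a ea]|/principalP[a ea]] := IHn _ _ lt_cofactors.
  by rewrite ey ea ex mulrA principal_mul.
by rewrite ex ea ey mulrA principal_mul orbT.
Qed.

End LocalRing.

Lemma Gpp_adj_chain (A : finComNzRingType) (I : {set A}) (x y : A) :
  0 \in I -> (y \in principal x) || (x \in principal y) -> ~ Gpp_adj I x y.
Proof.
move=> I0 /orP[yx|xy] [_ [xN yN]].
  by move/subsetP: (principal_sub_plus x I0) => /(_ y yx); apply/negP.
by move/subsetP: (principal_sub_plus y I0) => /(_ x xy); apply/negP.
Qed.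

Lemma edgeless_planar (T : finType) (Vs : {set T}) (adj : T -> T -> Prop) :
  (forall u v, ~ adj u v) -> planar_graph Vs adj.
Proof.
move=> noadj; exists (fun u => (INR (enum_rank u), 0%R)), (fun _ _ _ => (0%R, 0%R)).
split; [|split].
- by move=> u v _ _ [/INR_eq/ord_inj/enum_rank_inj].
- by move=> u v _ _ /noadj.
- by move=> u v u' v' _ _ _ _ /noadj.
Qed.

Theorem theorem3p10 (A : finComNzRingType) (m : {set A}) (I : {set A}) :
  local_with_max m ->
  (exists t : A, m = principal t) ->
  is_ideal I ->
  planar_graph (Gpp_vertices I) (Gpp_adj I).
Proof.
move=> m_local [t m_principal] [I0 _].
apply: edgeless_planar => x y.
exact: Gpp_adj_chain I0 (principal_chain m_local m_principal x y).
Qed.
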